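(* Let $\Gamma\subset\mathbb{C}^n$ be a discrete subgroup with $\mathrm{rank}_{\mathbb{C}}\Gamma=n$, and let $X=\mathbb{C}^n/\Gamma$ have a period matrix of the form $$P=\begin{pmatrix}0 & I_m & T\\ I_{n-m} & R_1 & R_2\end{pmatrix},\qquad \det(\mathrm{Im}(T))\neq 0,$$ with $R_1,R_2$ real matrices. Suppose that the real $(n-m,2m)$-matrix $(R_1\ R_2)$ does not satisfy the irrationality condition, so that $X$ has the Remmert–Morimoto decomposition $X\cong(\mathbb{C}^* )^q\times Y$ with $q\ge 1$ and $Y=\mathbb{C}^r/\Lambda$ a toroidal group. Let $\mathbb{T}:=\mathbb{C}^m_\Gamma/\Lambda_{\mathbb{T}}$, where $\Lambda_{\mathbb{T}}$ is the lattice generated by the columns of $(I_m\ T)$. If $\mathbb{T}$ is an abelian variety, then $Y$ is a quasi-abelian variety of kind $0$.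
   Context: $\mathrm{rank}_{\mathbb{C}}\Gamma$ is the complex dimension of the complex linear span of $\Gamma$. $\mathbb{R}^{n+m}_\Gamma$ denotes the real linear span of $\Gamma$, and $\mathbb{C}^m_\Gamma=\mathbb{R}^{n+m}_\Gamma\cap\sqrt{-1}\,\mathbb{R}^{n+m}_\Gamma$ is the maximal complex linear subspace contained in it (here, in the coordinates of the period matrix, the span of the last $m$ coordinate directions paired with $(I_m\ T)$). A toroidal group is a connected commutative complex Lie group $\mathbb{C}^r/\Lambda$ on which every holomorphic function is constant; $\mathbb{C}^n/\Gamma$ with the period matrix above is toroidal iff $(R_1\ R_2)$ satisfies the irrationality condition. For a toroidal group $Y=\mathbb{C}^r/\Lambda$ with $\mathrm{rank}\,\Lambda=r+m$, an ample Riemann form is a hermitian form $\mathcal{H}$ on $\mathbb{C}^r$ which is positive definite on the maximal complex subspace $\mathbb{C}^m_\Lambda$ of the real span $\mathbb{R}^{r+m}_\Lambda$ of $\Lambda$ and whose imaginary part is $\mathbb{Z}$-valued on $\Lambda\times\Lambda$; it is of kind $k$ if the restriction of $\mathrm{Im}\,\mathcal{H}$ to $\mathbb{R}^{r+m}_\Lambda\times\mathbb{R}^{r+m}_\Lambda$ has rank $2(m+k)$. $Y$ is a quasi-abelian variety of kind $0$ if it admits an ample Riemann form of kind $0$. *)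

From HB Require Import structures.
From mathcomp Require Import all_boot all_order all_algebra.
From mathcomp Require Import complex.
From mathcomp Require Import boolp classical_sets reals topology normedtype derive.
Set Implicit Arguments. Unset Strict Implicit. Unset Printing Implicit Defensive.
Import Order.TTheory GRing.Theory Num.Theory.
Import numFieldNormedType.Exports.
Local Open Scope ring_scope.
Local Open Scope complex_scope.

(* Vectors of C^k are column vectors 'cV[R[i]]_k; a subgroup / lattice is given
   by the matrix whose columns are its generators. *)

Definition in_Zspan (R : realType) (k l : nat) (M : 'M[R[i]]_(k, l))
    (v : 'cV[R[i]]_k) : Prop :=
  exists c : 'cV[int]_l, v = M *m map_mx (fun z : int => z%:~R) c.

Definition in_Rspan (R : realType) (k l : nat) (M : 'M[R[i]]_(k, l))
    (v : 'cV[R[i]]_k) : Prop :=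
  exists a : 'cV[R]_l, v = M *m map_mx (fun x : R => x%:C) a.

Definition in_max_complex_subspace (R : realType) (k l : nat)
    (M : 'M[R[i]]_(k, l)) (v : 'cV[R[i]]_k) : Prop :=
  in_Rspan M v /\ exists u, in_Rspan M u /\ v = 'i *: u.

(* the columns of M are R-linearly independent (so their Z-span is discrete) *)
Definition R_independent_cols (R : realType) (k l : nat) (M : 'M[R[i]]_(k, l))
  : Prop :=
  forall a : 'cV[R]_l, M *m map_mx (fun x : R => x%:C) a = 0 -> a = 0.

Definition irrationality_condition (R : realType) (p k : nat) (S : 'M[R]_(p, k))
  : Prop :=
  forall sigma : 'rV[int]_p, sigma != 0 ->
    ~ exists c : 'rV[int]_k,
        map_mx (fun z : int => z%:~R) sigma *m S = map_mx (fun z : int => z%:~R) c.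

Definition period_matrix (R : realType) (m p : nat) (T : 'M[R[i]]_m)
    (R1 R2 : 'M[R]_(p, m)) : 'M[R[i]]_(m + p, p + (m + m)) :=
  block_mx 0 (row_mx 1%:M T)
           1%:M (row_mx (map_mx (fun x : R => x%:C) R1)
                        (map_mx (fun x : R => x%:C) R2)).

Definition hform (R : realType) (k : nat) (H : 'M[R[i]]_k) (z w : 'cV[R[i]]_k)
  : R[i] :=
  (z^T *m H *m map_mx Num.conj w) 0 0.

Definition hermitian (R : realType) (k : nat) (H : 'M[R[i]]_k) : Prop :=
  forall i j, H j i = Num.conj (H i j).

(* Im H is Z-valued on Lambda x Lambda (Lambda = Z-span of the columns of Q);
   by bilinearity it suffices on the generators *)
Definition Im_integral_on (R : realType) (k l : nat) (H : 'M[R[i]]_k)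
    (Q : 'M[R[i]]_(k, l)) : Prop :=
  forall i j, exists z : int, complex.Im (hform H (col i Q) (col j Q)) = z%:~R.

(* The restriction of
   Im H to R^{r+s}_Lambda is represented in the real basis given by the
   columns of Q. *)
Definition ample_Riemann_form_of_kind (R : realType) (r s : nat)
    (Q : 'M[R[i]]_(r, r + s)) (H : 'M[R[i]]_r) (k : nat) : Prop :=
  [/\ hermitian H,
      (forall v, v != 0 -> in_max_complex_subspace Q v -> 0 < hform H v v),
      Im_integral_on H Q &
      \rank (\matrix_(i, j) complex.Im (hform H (col i Q) (col j Q)))
        = (2 * (s + k))%N].

Definition quasi_abelian_of_kind (R : realType) (r s : nat)
    (Q : 'M[R[i]]_(r, r + s)) (k : nat) : Prop :=
  exists H : 'M[R[i]]_r, ample_Riemann_form_of_kind Q H k.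

Definition abelian_variety (R : realType) (m : nat) (L : 'M[R[i]]_(m, m + m))
  : Prop :=
  exists H : 'M[R[i]]_m,
    [/\ hermitian H, (forall v, v != 0 -> 0 < hform H v v) & Im_integral_on H L].

(* holomorphic function on C^r: complex (Frechet) differentiable everywhere;
   the differential is R[i]-linear since 'cV[R[i]]_r is a normed R[i]-module *)
Definition holomorphic (R : realType) (r : nat) (f : 'cV[R[i]]_r -> R[i]^o)
  : Prop :=
  forall z, differentiable f z.

Definition toroidal (R : realType) (r l : nat) (Q : 'M[R[i]]_(r, l)) : Prop :=
  forall f : 'cV[R[i]]_r -> R[i]^o, holomorphic f ->
    (forall z v, in_Zspan Q v -> f (z + v) = f z) ->
    forall z w, f z = f w.

(* X = C^n / Gamma  is isomorphic (as complex Lie group) to (C^x)^q x Y,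
   Y = C^r / Lambda; with C^x = C^* = C / Z (via exp(2 pi i .)), this means a
   C-linear isomorphism C^n -> C^q x C^r carrying Gamma onto Z^q x Lambda. *)
Definition RM_decomposition (R : realType) (n l q r s : nat)
    (P : 'M[R[i]]_(n, l)) (Q : 'M[R[i]]_(r, r + s)) : Prop :=
  exists (A : 'M[R[i]]_(q + r, n)) (B : 'M[R[i]]_(n, q + r)),
    [/\ A *m B = 1%:M, B *m A = 1%:M &
        forall w, in_Zspan (block_mx (1%:M : 'M[R[i]]_q) 0 0 Q) w <->
                  exists v, in_Zspan P v /\ w = A *m v].

From Pilot Require Import Defs.
From HB Require Import structures.
From mathcomp Require Import all_boot all_order all_algebra.
From mathcomp Require Import complex.
From mathcomp Require Import boolp classical_sets reals topology normedtype derive.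
From mathcomp Require Import zify.
Set Implicit Arguments. Unset Strict Implicit. Unset Printing Implicit Defensive.
Import Order.TTheory GRing.Theory Num.Theory.
Import numFieldNormedType.Exports.
Local Open Scope ring_scope.
Local Open Scope complex_scope.

(* The real span of the period lattice is C^m x R^p, so its maximal complex
   subspace is C^m x 0, on which the period lattice restricts to the lattice
   of the abelian variety T.  The decomposition X = (C^x)^q x Y is C-linear
   and integral on the lattices, so it matches C^m x 0 with the maximal
   complex subspace of the real span of the lattice of Y, and comparing ranks
   gives s = m.  The C^m-component E of C^r -> C^n therefore maps the lattice
   of Y into that of T through an integral matrix G of rank 2m.  Pulling a
   polarization H of T back along E gives a hermitian form positive on the
   maximal complex subspace (E is injective there), whose imaginary part on
   the lattice of Y is the integral matrix G^T (Im H) G of rank 2m = 2(s + 0). *)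

Local Notation mxC X := (map_mx (fun x => x%:C) X).
Local Notation mxRe X := (map_mx (fun z => complex.Re z) X).
Local Notation mxIm X := (map_mx (fun z => complex.Im z) X).
Local Notation mxconj X := (map_mx Num.conj X).
Local Notation mxZ X := (map_mx (fun z : int => z%:~R) X).

Section ComplexMatrix.
Variable R : realType.

Lemma mxC0 m n : mxC (0 : 'M[R]_(m, n)) = 0.
Proof. exact: (map_mx0 (real_complex R)). Qed.

Lemma mxC1 n : mxC (1%:M : 'M[R]_n) = 1%:M.
Proof. exact: (map_mx1 (real_complex R)). Qed.

Lemma mxCD m n (X Y : 'M[R]_(m, n)) : mxC (X + Y) = mxC X + mxC Y.
Proof. exact: (map_mxD (real_complex R)). Qed.

Lemma mxCB m n (X Y : 'M[R]_(m, n)) : mxC (X - Y) = mxC X - mxC Y.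
Proof. exact: (map_mxB (real_complex R)). Qed.

Lemma mxC_mul m n k (X : 'M[R]_(m, n)) (Y : 'M_(n, k)) :
  mxC (X *m Y) = mxC X *m mxC Y.
Proof. exact: (map_mxM (real_complex R)). Qed.

Lemma mxC_eq_iC m n (X Y : 'M[R]_(m, n)) :
  mxC X = 'i *: mxC Y -> X = 0 /\ Y = 0.
Proof.
move/matrixP=> XY.
have XYij i j : X i j = 0 /\ 0 = Y i j.
  by have /eqP := XY i j; rewrite !mxE eq_complex /=; simpc => /andP[/eqP-> /eqP->].
by split; apply/matrixP => i j; rewrite mxE; case: (XYij i j).
Qed.

Lemma mxC_inj m n : injective (fun X : 'M[R]_(m, n) => mxC X).
Proof.
move=> X Y /matrixP XY; apply/matrixP => i j.
by have := XY i j; rewrite !mxE => -[].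
Qed.

Lemma mxC_eq0 m n (X : 'M[R]_(m, n)) : mxC X = 0 -> X = 0.
Proof. by rewrite -(mxC0 m n); apply: mxC_inj. Qed.

Lemma mxZ_mxC m n (X : 'M[int]_(m, n)) : mxZ X = mxC (mxZ X : 'M[R]_(m, n)).
Proof. by apply/matrixP => i j; rewrite !mxE (rmorph_int (real_complex R)). Qed.

Lemma mxconj_mxC m n (X : 'M[R]_(m, n)) : mxconj (mxC X) = mxC X.
Proof. by apply/matrixP => i j; rewrite !mxE conj_Creal // complex_real. Qed.

Lemma mxReIm m n (X : 'M[R[i]]_(m, n)) : X = mxC (mxRe X) + 'i *: mxC (mxIm X).
Proof. by apply/matrixP => i j; rewrite !mxE -complexE. Qed.

Lemma mxImD m n (X Y : 'M[R[i]]_(m, n)) : mxIm (X + Y) = mxIm X + mxIm Y.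
Proof. by apply/matrixP => i j; rewrite !mxE; case: (X i j); case: (Y i j). Qed.

Lemma mxIm_mxC m n (X : 'M[R]_(m, n)) : mxIm (mxC X) = 0.
Proof. by apply/matrixP => i j; rewrite !mxE. Qed.

Lemma Im_sum I (r : seq I) (F : I -> R[i]) :
  complex.Im (\sum_(k <- r) F k) = \sum_(k <- r) complex.Im (F k).
Proof.
elim: r => [|a r IH]; rewrite ?big_nil ?big_cons // -IH.
by case: (F a); case: (\sum_(k <- r) F k).
Qed.

Lemma mxIm_mulCl m n k (X : 'M[R]_(m, n)) (Y : 'M[R[i]]_(n, k)) :
  mxIm (mxC X *m Y) = X *m mxIm Y.
Proof.
apply/matrixP => i j; rewrite !mxE Im_sum; apply: eq_bigr => l _.
by rewrite !mxE; case: (Y l j) => a b /=; rewrite mul0r addr0.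
Qed.

Lemma mxIm_mulCr m n k (Y : 'M[R[i]]_(m, n)) (X : 'M[R]_(n, k)) :
  mxIm (Y *m mxC X) = mxIm Y *m X.
Proof.
apply/matrixP => i j; rewrite !mxE Im_sum; apply: eq_bigr => l _.
by rewrite !mxE; case: (Y i l) => a b /=; rewrite mulr0 add0r.
Qed.

End ComplexMatrix.

Lemma mx_inverse_size (F : fieldType) m n (A : 'M[F]_(m, n)) (B : 'M_(n, m)) :
  A *m B = 1%:M -> B *m A = 1%:M -> m = n.
Proof.
have rightinv_leq k l (X : 'M[F]_(k, l)) Y : X *m Y = 1%:M -> (k <= l)%N.
  move=> XY; have /eqP <- : row_free X by apply/row_freeP; exists Y.
  exact: rank_leq_col.
move=> AB BA; apply/eqP.
by rewrite eqn_leq (rightinv_leq _ _ _ _ AB) (rightinv_leq _ _ _ _ BA).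
Qed.

Section Spans.
Variable R : realType.

Lemma span_cols_mx (K : Type) (f : K -> R[i]) k l n (M : 'M[R[i]]_(k, l))
    (N : 'M_(k, n)) :
  (forall j, exists c, col j N = M *m map_mx f c) ->
  exists C : 'M[K]_(l, n), N = M *m map_mx f C.
Proof.
move=> /choice[c Nc]; exists (\matrix_(i, j) c j i 0); apply/matrixP => i j.
have /matrixP/(_ i 0) := Nc j; rewrite !mxE => ->.
by apply: eq_bigr => a _; rewrite !mxE.
Qed.

Lemma in_Zspan_col k l (M : 'M[R[i]]_(k, l)) j : in_Zspan M (col j M).
Proof.
exists (delta_mx j 0); rewrite colE; congr (_ *m _).
by apply/matrixP => a b; rewrite !mxE; case: (_ && _).
Qed.

Lemma R_independent_colsP k l n (M : 'M[R[i]]_(k, l)) (X : 'M[R]_(l, n)) :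
  R_independent_cols M -> M *m mxC X = 0 -> X = 0.
Proof.
move=> Mind MX0; apply/matrixP => i j.
have /Mind/matrixP/(_ i 0) : M *m mxC (col j X) = 0.
  by rewrite map_col colE mulmxA -colE MX0 col0.
by rewrite !mxE.
Qed.

Lemma R_independent_cols_size k l l' (M : 'M[R[i]]_(k, l)) (M' : 'M_(k, l'))
    (C : 'M[R]_(l', l)) (D : 'M[R]_(l, l')) :
  R_independent_cols M -> R_independent_cols M' ->
  M = M' *m mxC C -> M' = M *m mxC D -> l = l'.
Proof.
have inv k1 k2 (N : 'M[R[i]]_(k, k1)) (N' : 'M_(k, k2)) X Y :
    R_independent_cols N -> N = N' *m mxC X -> N' = N *m mxC Y -> Y *m X = 1%:M.
  move=> Nind NX N'Y; apply/eqP; rewrite -subr_eq0; apply/eqP.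
  apply: (R_independent_colsP Nind).
  by rewrite mxCB mxC1 mxC_mul mulmxBr mulmx1 mulmxA -N'Y -NX subrr.
move=> Mind M'ind MC M'D.
exact: (mx_inverse_size (inv _ _ _ _ _ _ Mind MC M'D) (inv _ _ _ _ _ _ M'ind M'D MC)).
Qed.

Lemma row_free_spanning k l n (L : 'M[R[i]]_(k, l)) (G : 'M[R]_(l, n)) :
  R_independent_cols L -> (forall w, in_Rspan (L *m mxC G) w) -> row_free G.
Proof.
move=> Lind LG; have [X LX] := span_cols_mx (fun j => LG (col j L)).
apply/row_freeP; exists X; apply/eqP; rewrite -subr_eq0; apply/eqP.
apply: (R_independent_colsP Lind).
by rewrite mxCB mxC1 mxC_mul mulmxBr mulmx1 mulmxA -LX subrr.
Qed.

Lemma in_Rspan_mulmx k k' l l' (A : 'M[R[i]]_(k', k)) (M : 'M_(k, l))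
    (M' : 'M_(k', l')) (D : 'M[R]_(l', l)) v :
  A *m M = M' *m mxC D -> in_Rspan M v -> in_Rspan M' (A *m v).
Proof. by move=> AM [a ->]; exists (D *m a); rewrite mulmxA AM mxC_mul mulmxA. Qed.

Lemma in_max_complex_subspace_mulmx k k' l l' (A : 'M[R[i]]_(k', k))
    (M : 'M_(k, l)) (M' : 'M_(k', l')) (D : 'M[R]_(l', l)) v :
  A *m M = M' *m mxC D ->
  in_max_complex_subspace M v -> in_max_complex_subspace M' (A *m v).
Proof.
move=> AM [vM [u [uM vu]]]; split; first exact: in_Rspan_mulmx AM vM.
by exists (A *m u); split; [exact: in_Rspan_mulmx AM uM | rewrite vu scalemxAr].
Qed.

End Spans.

Section HermitianForm.
Variable R : realType.

Lemma hform_col k l (H : 'M[R[i]]_k) (X : 'M_(k, l)) i j :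
  hform H (col i X) (col j X) = (X^T *m H *m mxconj X) i j.
Proof.
rewrite /hform tr_col map_col -row_mul !mxE.
by apply: eq_bigr => c _; rewrite !mxE.
Qed.

Lemma hform_pullback k l (H : 'M[R[i]]_k) (E : 'M_(k, l)) u w :
  hform (E^T *m H *m mxconj E) u w = hform H (E *m u) (E *m w).
Proof. by rewrite /hform trmx_mul (map_mxM Num.conj) !mulmxA. Qed.

(* [Defs.] is needed: sesquilinear.v also exports a [hermitian]. *)
Lemma hermitian_pullback k l (H : 'M[R[i]]_k) (E : 'M_(k, l)) :
  Defs.hermitian H -> Defs.hermitian (E^T *m H *m mxconj E).
Proof.
move=> Hherm i j.
have HT : H^T = mxconj H by apply/matrixP => a b; rewrite !mxE Hherm.
have conjK : mxconj (mxconj E) = E by apply/matrixP => a b; rewrite !mxE conjCK.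
have : (E^T *m H *m mxconj E)^T = mxconj (E^T *m H *m mxconj E).
  by rewrite !trmx_mul trmxK HT !(map_mxM Num.conj) conjK map_trmx mulmxA.
by move/matrixP => /(_ i j); rewrite !mxE.
Qed.

Lemma Im_hform_scalei k (H : 'M[R[i]]_k) w :
  complex.Im (hform H w ('i *: w)) = - complex.Re (hform H w w).
Proof.
have -> : hform H w ('i *: w) = Num.conj 'i * hform H w w.
  by rewrite /hform map_mxZ -scalemxAr mxE.
by rewrite conjCi; case: (hform H w w) => a b; simpc.
Qed.

Lemma mxIm_gram_mulC k l n n' (H : 'M[R[i]]_k) (M : 'M_(k, l))
    (X : 'M[R]_(l, n)) (Y : 'M[R]_(l, n')) :
  mxIm ((M *m mxC X)^T *m H *m mxconj (M *m mxC Y))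
  = X^T *m mxIm (M^T *m H *m mxconj M) *m Y.
Proof.
have trC : (mxC X)^T = mxC X^T by apply/matrixP => a b; rewrite !mxE.
rewrite trmx_mul (map_mxM Num.conj) mxconj_mxC trC !mulmxA.
by rewrite mxIm_mulCr -!mulmxA mxIm_mulCl !mulmxA.
Qed.

(* For w <> 0, Im H(w, i w) = - Re H(w, w) < 0, so Im H has trivial kernel. *)
Lemma Im_gram_row_free k l (H : 'M[R[i]]_k) (M : 'M_(k, l)) :
  (forall v, v != 0 -> 0 < hform H v v) ->
  R_independent_cols M -> (forall w, in_Rspan M w) ->
  row_free (mxIm (M^T *m H *m mxconj M)).
Proof.
move=> Hpos Mind Mspan; rewrite -kermx_eq0; apply/eqP/row_matrixP => i.
set u := row i _; rewrite row0.
have uJ : u *m mxIm (M^T *m H *m mxconj M) = 0.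
  by rewrite /u -row_mul mulmx_ker row0.
set w := M *m mxC u^T.
have [y wy] := Mspan ('i *: w).
have Im0 : complex.Im (hform H w ('i *: w)) = 0.
  have -> : hform H w ('i *: w) = (w^T *m H *m mxconj ('i *: w)) 0 0 by [].
  have := mxIm_gram_mulC H M u^T y; rewrite trmxK uJ !mul0mx => /matrixP/(_ 0 0).
  by rewrite !mxE wy.
case: (eqVneq w 0) => [w0 | /Hpos].
  by rewrite -[u]trmxK (R_independent_colsP Mind w0) trmx0.
rewrite ltcE => /andP[_]; move: Im0; rewrite Im_hform_scalei => /eqP.
by rewrite oppr_eq0 => /eqP ->; rewrite ltxx.
Qed.

End HermitianForm.

Section Lattice.
Variables (R : realType) (m : nat) (T : 'M[R[i]]_m).
Hypothesis ImT : \det (mxIm T) != 0.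
Local Notation L := (row_mx 1%:M T).

Let ImT_unit : mxIm T \in unitmx.
Proof. by rewrite unitmxE unitfE. Qed.

Lemma lattice_mulmxC (y : 'cV[R]_(m + m)) :
  L *m mxC y = mxC (usubmx y) + T *m mxC (dsubmx y).
Proof. by rewrite -{1}[y]vsubmxK map_col_mx mul_row_col mul1mx. Qed.

Lemma lattice_R_independent : R_independent_cols L.
Proof.
move=> y; rewrite lattice_mulmxC => Ly0.
have ImT_y : mxIm T *m dsubmx y = 0.
  have := congr1 (fun X => mxIm X) Ly0; rewrite mxImD mxIm_mxC add0r mxIm_mulCr => ->.
  by apply/matrixP => i j; rewrite !mxE.
have yd : dsubmx y = 0 by rewrite -[dsubmx y](mulKmx ImT_unit) ImT_y mulmx0.
move: Ly0; rewrite yd mxC0 mulmx0 addr0 => /mxC_eq0 yu.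
by rewrite -[y]vsubmxK yu yd col_mx0.
Qed.

Lemma lattice_R_spanning w : in_Rspan L w.
Proof.
set b := invmx (mxIm T) *m mxIm w.
have ImTb : mxIm T *m b = mxIm w by rewrite /b mulmxA mulmxV // mul1mx.
exists (col_mx (mxRe w - mxRe T *m b) b).
rewrite lattice_mulmxC col_mxKu col_mxKd [X in X *m mxC b]mxReIm mulmxDl.
rewrite -scalemxAl -!mxC_mul ImTb addrA -mxCD subrK.
exact: mxReIm.
Qed.

End Lattice.

Section PeriodMatrix.
Variables (R : realType) (m p : nat) (T : 'M[R[i]]_m) (R1 R2 : 'M[R]_(p, m)).
Hypothesis ImT : \det (mxIm T) != 0.
Local Notation L := (row_mx 1%:M T).
Local Notation P := (period_matrix T R1 R2).

Lemma period_mulmxC n (X : 'M[R]_(p + (m + m), n)) :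
  P *m mxC X = col_mx (L *m mxC (dsubmx X)) (mxC (row_mx 1%:M (row_mx R1 R2) *m X)).
Proof.
have -> : P = col_mx (row_mx 0 L) (mxC (row_mx 1%:M (row_mx R1 R2))).
  by rewrite /period_matrix block_mxEv !map_row_mx mxC1.
rewrite mul_col_mx -[X in row_mx 0 L *m mxC X]vsubmxK map_col_mx mul_row_col.
by rewrite mul0mx add0r mxC_mul.
Qed.

Lemma period_R_independent : R_independent_cols P.
Proof.
move=> a; rewrite period_mulmxC => /eqP; rewrite col_mx_eq0.
case/andP => /eqP/(lattice_R_independent ImT) ad /eqP/mxC_eq0.
rewrite -{1}[a]vsubmxK mul_row_col mul1mx ad mulmx0 addr0 => au.
by rewrite -[a]vsubmxK au ad col_mx0.
Qed.

Lemma period_max_complex_subspaceP v :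
  in_max_complex_subspace P v <-> dsubmx v = 0.
Proof.
have upper_Rspan w : in_Rspan P (col_mx w 0).
  have [y ->] := lattice_R_spanning ImT w.
  exists (col_mx (- (row_mx R1 R2 *m y)) y).
  by rewrite period_mulmxC col_mxKd mul_row_col mul1mx addNr mxC0.
split => [[[a va] [u [[b ub] vu]]] | vd].
- move: vu; rewrite va ub !period_mulmxC scale_col_mx col_mxKd.
  by case/eq_col_mx => _ /mxC_eq_iC[-> _]; rewrite mxC0.
rewrite -[v]vsubmxK vd; split; first exact: upper_Rspan.
exists (col_mx (- 'i *: usubmx v) 0); split; first exact: upper_Rspan.
by rewrite scale_col_mx scaler0 scalerA mulrN -expr2 sqr_i opprK scale1r.
Qed.

End PeriodMatrix.

Section BlockLattice.
Variables (R : realType) (q r s : nat) (Q : 'M[R[i]]_(r, r + s)).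
Local Notation K := (block_mx (1%:M : 'M[R[i]]_q) 0 0 Q).

Lemma block_mulmxC n (X : 'M[R]_(q + (r + s), n)) :
  K *m mxC X = col_mx (mxC (usubmx X)) (Q *m mxC (dsubmx X)).
Proof.
by rewrite -{1}[X]vsubmxK map_col_mx mul_block_col !mul1mx !mul0mx addr0 add0r.
Qed.

Lemma block_R_independent : R_independent_cols Q -> R_independent_cols K.
Proof.
move=> Qind a; rewrite block_mulmxC => /eqP; rewrite col_mx_eq0.
case/andP => /eqP/mxC_eq0 au /eqP/Qind ad.
by rewrite -[a]vsubmxK au ad col_mx0.
Qed.

Lemma block_max_complex_subspaceP v :
  in_max_complex_subspace K v <->
  usubmx v = 0 /\ in_max_complex_subspace Q (dsubmx v).
Proof.
split => [[[a va] [u [[b ub] vu]]] | [vu [[a va] [u [[b ub] vdu]]]]].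
- have := vu; rewrite {1}va ub !block_mulmxC scale_col_mx.
  case/eq_col_mx => /mxC_eq_iC[_ ub0] dab.
  rewrite vu ub block_mulmxC scale_col_mx col_mxKu col_mxKd ub0 mxC0 scaler0.
  split=> //; split; first by exists (dsubmx a).
  by exists (Q *m mxC (dsubmx b)); split; [exists (dsubmx b) |].
- split.
    exists (col_mx 0 a).
    by rewrite block_mulmxC col_mxKu col_mxKd mxC0 -vu -va vsubmxK.
  exists (col_mx 0 u); split.
    by exists (col_mx 0 b); rewrite block_mulmxC col_mxKu col_mxKd mxC0 ub.
  by rewrite scale_col_mx scaler0 -vdu -vu vsubmxK.
Qed.

End BlockLattice.

Section RemmertMorimoto.
Variables (R : realType) (n l q r s : nat).
Variables (P : 'M[R[i]]_(n, l)) (Q : 'M[R[i]]_(r, r + s)).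
Variables (A : 'M[R[i]]_(q + r, n)) (B : 'M[R[i]]_(n, q + r)).
Local Notation K := (block_mx (1%:M : 'M[R[i]]_q) 0 0 Q).
Hypotheses (AB : A *m B = 1%:M) (BA : B *m A = 1%:M).
Hypothesis AZ : forall w, in_Zspan K w <-> exists v, in_Zspan P v /\ w = A *m v.

Lemma RM_dim : n = (q + r)%N.
Proof. exact: mx_inverse_size BA AB. Qed.

Lemma RM_lattice_image : exists D : 'M[int]_(q + (r + s), l), A *m P = K *m mxZ D.
Proof.
apply: span_cols_mx => j; apply/AZ; exists (col j P).
by split; [exact: in_Zspan_col | rewrite !colE mulmxA].
Qed.

Lemma RM_lattice_preimage : exists C : 'M[int]_(l, q + (r + s)), B *m K = P *m mxZ C.
Proof.
apply: span_cols_mx => j; have [v [[c vc] Kv]] := (AZ (col j K)).1 (in_Zspan_col K j).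
by exists c; rewrite colE -mulmxA -colE Kv mulmxA BA mul1mx vc.
Qed.

Lemma RM_lattice_Q : exists C : 'M[int]_(l, r + s), rsubmx B *m Q = P *m mxZ C.
Proof.
have [C BK] := RM_lattice_preimage; exists (rsubmx C).
have := congr1 rsubmx BK; rewrite -[B in B *m K]hsubmxK mul_row_block row_mxKr.
rewrite mulmx0 add0r => ->.
by rewrite -[C in mxZ C]hsubmxK map_row_mx mul_mx_row row_mxKr.
Qed.

Lemma RM_rank : R_independent_cols P -> R_independent_cols Q -> l = (q + (r + s))%N.
Proof.
move=> Pind Qind.
have [D APK] := RM_lattice_image; have [C BKP] := RM_lattice_preimage.
have APind : R_independent_cols (A *m P).
  move=> a; rewrite -mulmxA => /(congr1 (mulmx B)).
  by rewrite mulmxA BA mul1mx mulmx0 => /Pind.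
apply: (R_independent_cols_size APind (block_R_independent (q := q) Qind)).
  by rewrite APK mxZ_mxC.
by rewrite -[K]mul1mx -AB -mulmxA BKP mulmxA mxZ_mxC.
Qed.

Lemma RM_rsubmx_injective (v : 'cV[R[i]]_r) : rsubmx B *m v = 0 -> v = 0.
Proof.
move=> Bv; have : col_mx (0 : 'cV_q) v = 0.
  rewrite -[col_mx _ _]mul1mx -AB -mulmxA -{1}[B]hsubmxK mul_row_col.
  by rewrite mulmx0 add0r Bv mulmx0.
by move/eqP; rewrite col_mx_eq0 => /andP[_ /eqP].
Qed.

Lemma RM_max_complex_subspace_image v :
  in_max_complex_subspace Q v -> in_max_complex_subspace P (rsubmx B *m v).
Proof.
have [C BQ] := RM_lattice_Q; rewrite mxZ_mxC in BQ.
exact: in_max_complex_subspace_mulmx BQ.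
Qed.

Lemma RM_max_complex_subspace_preimage w :
  in_max_complex_subspace P w -> exists2 b, in_Rspan Q b & w = rsubmx B *m b.
Proof.
move=> wP; have [D APK] := RM_lattice_image; rewrite mxZ_mxC in APK.
have /block_max_complex_subspaceP[Awu [Awd _]] := in_max_complex_subspace_mulmx APK wP.
exists (dsubmx (A *m w)) => //.
transitivity (B *m (A *m w)); first by rewrite mulmxA BA mul1mx.
by rewrite -{1}[A *m w]vsubmxK Awu -{1}[B]hsubmxK mul_row_col mulmx0 add0r.
Qed.

End RemmertMorimoto.

Section PullbackForm.
Variables (R : realType) (m r s : nat) (H : 'M[R[i]]_m) (L : 'M[R[i]]_(m, m + m)).
Variables (E : 'M[R[i]]_(m, r)) (Q : 'M[R[i]]_(r, r + s)) (G : 'M[R]_(m + m, r + s)).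
Hypotheses (Hpos : forall v, v != 0 -> 0 < hform H v v) (HL : Im_integral_on H L).
Hypotheses (Lind : R_independent_cols L) (Lspan : forall w, in_Rspan L w).
Hypotheses (EQ : E *m Q = L *m mxC G) (Gint : G \is a mxOver Num.int).

Lemma Im_gram_pullback :
  \matrix_(i, j) complex.Im (hform (E^T *m H *m mxconj E) (col i Q) (col j Q))
  = G^T *m mxIm (L^T *m H *m mxconj L) *m G.
Proof.
apply/matrixP => i j; rewrite mxE hform_col.
have -> : Q^T *m (E^T *m H *m mxconj E) *m mxconj Q
        = (E *m Q)^T *m H *m mxconj (E *m Q).
  by rewrite trmx_mul (map_mxM Num.conj) !mulmxA.
by rewrite EQ -(mxIm_gram_mulC H L G G) [RHS]mxE.
Qed.

Lemma Im_integral_on_pullback : Im_integral_on (E^T *m H *m mxconj E) Q.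
Proof.
move=> i j; apply/intrP.
have /matrixP/(_ i j) := Im_gram_pullback; rewrite mxE => ->.
have GTint : G^T \is a mxOver Num.int by apply/mxOverP => a b; rewrite mxE (mxOverP Gint).
have Jint : mxIm (L^T *m H *m mxconj L) \is a mxOver Num.int.
  by apply/mxOverP => a b; rewrite mxE -hform_col; apply/intrP/HL.
by apply/mxOverP; rewrite !mxOverM.
Qed.

Lemma ample_Riemann_form_pullback k :
  Defs.hermitian H -> row_free G ->
  (forall v, v != 0 -> in_max_complex_subspace Q v -> E *m v != 0) ->
  m = (s + k)%N ->
  ample_Riemann_form_of_kind Q (E^T *m H *m mxconj E) k.
Proof.
move=> Hherm Gfree Einj msk; split.
- exact: hermitian_pullback.
- by move=> v v0 vQ; rewrite hform_pullback; apply/Hpos/Einj.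
- exact: Im_integral_on_pullback.
rewrite Im_gram_pullback mxrankMfree // mxrankMfree ?Im_gram_row_free //.
by rewrite mxrank_tr (eqP Gfree) mul2n -addnn -msk.
Qed.

End PullbackForm.

Section PeriodDecomposition.
Variables (R : realType) (m p : nat) (T : 'M[R[i]]_m) (R1 R2 : 'M[R]_(p, m)).
Variables (q r s : nat) (Q : 'M[R[i]]_(r, r + s)).
Variables (A : 'M[R[i]]_(q + r, m + p)) (B : 'M[R[i]]_(m + p, q + r)).
Local Notation L := (row_mx 1%:M T).
Local Notation P := (period_matrix T R1 R2).
Local Notation E := (usubmx (rsubmx B)).
Hypothesis ImT : \det (mxIm T) != 0.
Hypotheses (AB : A *m B = 1%:M) (BA : B *m A = 1%:M).
Hypothesis AZ : forall w, in_Zspan (block_mx (1%:M : 'M[R[i]]_q) 0 0 Q) w <->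
  exists v, in_Zspan P v /\ w = A *m v.

Lemma period_decomposition_dim : R_independent_cols Q -> s = m.
Proof.
move=> Qind; have := RM_dim AB BA.
have := RM_rank AB BA AZ (period_R_independent (R1 := R1) (R2 := R2) ImT) Qind.
lia.
Qed.

Lemma period_decomposition_upper_neq0 v :
  v != 0 -> in_max_complex_subspace Q v -> E *m v != 0.
Proof.
move=> v0 vQ; apply: contra v0 => /eqP Ev0; apply/eqP/(RM_rsubmx_injective AB).
have /(period_max_complex_subspaceP R1 R2 ImT) Bvd :=
  RM_max_complex_subspace_image BA AZ vQ.
by rewrite -[rsubmx B *m v]vsubmxK -mul_usub_mx Ev0 Bvd col_mx0.
Qed.

Lemma period_decomposition_lattice :
  exists G : 'M[R]_(m + m, r + s),
    [/\ G \is a mxOver Num.int, E *m Q = L *m mxC G & row_free G].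
Proof.
have [C BQ] := RM_lattice_Q BA AZ.
set G := dsubmx (mxZ C : 'M[R]_(_, _)).
have EQ : E *m Q = L *m mxC G by rewrite mul_usub_mx BQ mxZ_mxC period_mulmxC col_mxKu.
exists G; split => //; first by apply/mxOverP => i j; rewrite !mxE intr_int.
apply: (row_free_spanning (lattice_R_independent ImT)) => w; rewrite -EQ.
have /(RM_max_complex_subspace_preimage BA AZ)[_ [a ->] wb] :
    in_max_complex_subspace P (col_mx w (0 : 'cV_p)).
  by apply/(period_max_complex_subspaceP R1 R2 ImT); rewrite col_mxKd.
by exists a; move/(congr1 usubmx): wb; rewrite col_mxKu -mul_usub_mx mulmxA.
Qed.

End PeriodDecomposition.

Theorem lemma2p2 (R : realType) (m p : nat) (T : 'M[R[i]]_m)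
    (R1 R2 : 'M[R]_(p, m)) :
  \det (map_mx (fun z : R[i] => complex.Im z) T) != 0 ->
  ~ irrationality_condition (row_mx R1 R2) ->
  abelian_variety (row_mx (1%:M : 'M[R[i]]_m) T) ->
  forall (q r s : nat) (Q : 'M[R[i]]_(r, r + s)),
    (1 <= q)%N ->
    R_independent_cols Q ->
    toroidal Q ->
    RM_decomposition q (period_matrix T R1 R2) Q ->
    quasi_abelian_of_kind Q 0.
Proof.
move=> ImT _ [H [Hherm Hpos HL]] q r s Q _ Qind _ [A [B [AB BA AZ]]].
have [G [Gint EQ Gfree]] := period_decomposition_lattice ImT BA AZ.
exists ((usubmx (rsubmx B))^T *m H *m mxconj (usubmx (rsubmx B))).
apply: (ample_Riemann_form_pullback Hpos HL (lattice_R_independent ImT)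
          (lattice_R_spanning ImT) EQ Gint Hherm Gfree).
  exact: period_decomposition_upper_neq0 ImT AB BA AZ.
by rewrite addn0 (period_decomposition_dim ImT AB BA AZ Qind).
Qed.
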